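(* Let $Z=(X,Y)\in G_m(1)$. Then for every transition function $\varphi$ there exists $\epsilon_0>0$ such that for all $0<\epsilon\le\epsilon_0$ all singular points of $\mathcal P(Z)_\epsilon$ in $S^2$ are hyperbolic.
   Context: Fix $m\ge1$. $\chi_m$ is the space of real polynomial vector fields $X=P\partial_x+Q\partial_y$ on $\mathbb R^2$ with $\deg P,\deg Q\le m$, identified with coefficient vectors in $\mathbb R^{(m+1)(m+2)}$; $\deg X=\max\{\deg P,\deg Q\}$. Let $f(x,y)=y$, $D=\{y=0\}$, $N=\{y>0\}$, $S=\{y<0\}$. $\Omega_m$ is the set of pairs $Z=(X,Y)$, $X,Y\in\chi_m$ of degree exactly $m$, regarded as the discontinuous vector field equal to $X$ on $\{y\ge0\}$ and $Y$ on $\{y\le0\}$. For $X\in\chi_m$, $\mathcal P(X)$ is the unique analytic vector field tangent to $S^2=\{x^2+y^2+z^2=1\}$ whose restriction to $S^2_+=\{z>0\}$ is $z^{m-1}\wp^*(X)$, $\wp(u,v)=(u,v,1)/\sqrt{u^2+v^2+1}$; $S^1=\{z=0\}$ is invariant. $\mathcal P(Z)=(\mathcal P(X),\mathcal P(Y))$ is the discontinuous field on the sphere equal to $\mathcal P(X)$ where $y\ge0$, $\mathcal P(Y)$ where $y\le0$, with $f(x,y,z)=y$, $D=\{y=0\}$, $N=\{y>0\}$, $S=\{y<0\}$. A transition function is a $C^\infty$ $\varphi:\mathbb R\to\mathbb R$ with $\varphi=0$ on $(-\infty,-1]$, $\varphi=1$ on $[1,\infty)$, $\varphi'>0$ on $(-1,1)$.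 $\mathcal P(Z)_\epsilon(q)=(1-\varphi_\epsilon(f(q)))\mathcal P(Y)(q)+\varphi_\epsilon(f(q))\mathcal P(X)(q)$, $\varphi_\epsilon(t)=\varphi(t/\epsilon)$. For a discontinuous field $(U,V)$ write $Uf=\langle\nabla f,U\rangle$, $U^2f=U(Uf)$. Escaping arc: $Uf>0,Vf<0$; sliding arc: $Uf<0,Vf>0$; on these the Filippov vector field $F(p)$ is the vector in the cone spanned by $U(p),V(p)$ tangent to $D$. A fold point is $p\in D$ with $Vf(p)\neq0,Uf(p)=0,U^2f(p)\neq0$ or $Uf(p)\neq0,Vf(p)=0,V^2f(p)\neq0$. A hyperbolic singular point of $F$ is $p\in D$ with $Uf(p)Vf(p)<0$, $\det[U,V](p)=0$ and nonzero derivative at $p$ of $\det[U,V]|_D$. A $D$-singularity is a point of $D$ that is not $D$-regular ($p$ is $D$-regular if $Uf(p)Vf(p)>0$, or $Uf(p)Vf(p)<0$ and $\det[U,V](p)\neq0$); it is elementary if it is a fold point or a hyperbolic singular point of $F$. $\mathcal S_m$ is the set of $X\in\chi_m$ such that $\mathcal P(X)$ has all singular points hyperbolic, all periodic orbits hyperbolic, and no saddle connections in $S^2$ except those contained in $S^1$; ''$X|_N\in\mathcal S_m$'' (resp. ''$Y|_S\in\mathcal S_m$'') means these three conditions hold for $\mathcal P(X)$ restricted to $N$ (resp. $\mathcal P(Y)$ restricted to $S$). $G_m(1)$ is the set of $Z=(X,Y)\in\Omega_m$ with $X|_N,Y|_S\in\mathcal S_m$ and every $D$-singularity of $\mathcal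 P(Z)=(U,V)$ elementary. *)

From Stdlib Require Import Reals.
Open Scope R_scope.

Definition R3 : Type := (R * R * R)%type.
Definition cx (q : R3) : R := fst (fst q).
Definition cy (q : R3) : R := snd (fst q).
Definition cz (q : R3) : R := snd q.
Definition v0 : R3 := (0, 0, 0).
Definition vadd (p q : R3) : R3 := (cx p + cx q, cy p + cy q, cz p + cz q).
Definition vscale (a : R) (q : R3) : R3 := (a * cx q, a * cy q, a * cz q).
Definition dot (p q : R3) : R := cx p * cx q + cy p * cy q + cz p * cz q.
Definition dist2 (p q : R3) : R :=
  (cx p - cx q)^2 + (cy p - cy q)^2 + (cz p - cz q)^2.
(* triple product  det(p, u, v) = p . (u x v) *)
Definition det3 (p u v : R3) : R :=
  cx p * (cy u * cz v - cz u * cy v)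
  - cy p * (cx u * cz v - cz u * cx v)
  + cz p * (cx u * cy v - cy u * cx v).

Definition sphere (q : R3) : Prop := cx q ^ 2 + cy q ^ 2 + cz q ^ 2 = 1.
Definition tangent (q u : R3) : Prop := dot q u = 0.

(* vector fields on (a neighbourhood of) the sphere, given on R^3 *)
Definition VF3 : Type := R3 -> R3.

(* A real polynomial in (x,y) is given by its coefficients p i j of x^i y^j. *)
Definition Poly2 : Type := nat -> nat -> R.
Definition poly_deg_le (m : nat) (p : Poly2) : Prop :=
  forall i j : nat, (m < i + j)%nat -> p i j = 0.

(* homogenization of degree m:  z^m p(x/z, y/z) = sum p_ij x^i y^j z^(m-i-j) *)
Definition hom_eval (m : nat) (p : Poly2) (x y z : R) : R :=
  sum_f_R0 (fun i =>
    sum_f_R0 (fun j => p i j * x ^ i * y ^ j * z ^ (m - i - j)) (m - i)) m.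

(* X = P d/dx + Q d/dy *)
Record PVF : Type := mkPVF { pP : Poly2 ; pQ : Poly2 }.

Definition in_chi (m : nat) (X : PVF) : Prop :=
  poly_deg_le m (pP X) /\ poly_deg_le m (pQ X).

Definition deg_exact (m : nat) (X : PVF) : Prop :=
  in_chi m X /\
  exists i j : nat, (i + j = m)%nat /\ (pP X i j <> 0 \/ pQ X i j <> 0).

(* Poincare compactification P(X) on S^2 (written as a polynomial field on
   R^3 tangent to S^2): the analytic field which equals z^(m-1) times the pullback of X by wp on
   z > 0.  With P*, Q* the degree-m homogenizations of P, Q:
     xdot = (1-x^2) P* - x y Q*,  ydot = -x y P* + (1-y^2) Q*,
     zdot = - z (x P* + y Q* ). *)
Definition poinc (m : nat) (X : PVF) : VF3 := fun q =>
  let x := cx q in let y := cy q in let z := cz q in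
  let Ps := hom_eval m (pP X) x y z in
  let Qs := hom_eval m (pQ X) x y z in
  ((1 - x ^ 2) * Ps - x * y * Qs,
   - x * y * Ps + (1 - y ^ 2) * Qs,
   - z * (x * Ps + y * Qs)).

Definition dderiv_s (g : R3 -> R) (q u : R3) (l : R) : Prop :=
  derivable_pt_lim (fun t => g (vadd q (vscale t u))) 0 l.
Definition dderiv (W : VF3) (q u L : R3) : Prop :=
  dderiv_s (fun p => cx (W p)) q u (cx L) /\
  dderiv_s (fun p => cy (W p)) q u (cy L) /\
  dderiv_s (fun p => cz (W p)) q u (cz L).

Definition curve_deriv (g : R -> R3) (t : R) (L : R3) : Prop :=
  derivable_pt_lim (fun s => cx (g s)) t (cx L) /\
  derivable_pt_lim (fun s => cy (g s)) t (cy L) /\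
  derivable_pt_lim (fun s => cz (g s)) t (cz L).

Definition integral_curve (W : VF3) (g : R -> R3) : Prop :=
  forall t, curve_deriv g t (W (g t)).

(* Hyperbolic singular point of W on S^2: W(q) = 0 and the linearization
   A = DW(q) restricted to T_q S^2 has no eigenvalue i b with b real, i.e.
   no nonzero complex eigenvector u + i v (u, v tangent) with
   A u = -b v,  A v = b u. *)
Definition hyperbolic_sing (W : VF3) (q : R3) : Prop :=
  sphere q /\ W q = v0 /\
  forall (b : R) (u v Lu Lv : R3),
    tangent q u -> tangent q v ->
    dderiv W q u Lu -> dderiv W q v Lv ->
    Lu = vscale (- b) v -> Lv = vscale b u ->
    u = v0 /\ v = v0.

Definition saddle (W : VF3) (q : R3) : Prop :=
  hyperbolic_sing W q /\
  exists (l1 l2 : R) (u1 u2 L1 L2 : R3),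
    l1 < 0 /\ 0 < l2 /\
    tangent q u1 /\ tangent q u2 /\ u1 <> v0 /\ u2 <> v0 /\
    dderiv W q u1 L1 /\ L1 = vscale l1 u1 /\
    dderiv W q u2 L2 /\ L2 = vscale l2 u2.

Definition nonconstant (g : R -> R3) : Prop := exists t1 t2, g t1 <> g t2.

Definition periodic_orbit (W : VF3) (A : R3 -> Prop) (g : R -> R3) (T : R)
  : Prop :=
  integral_curve W g /\ (forall t, sphere (g t) /\ A (g t)) /\
  nonconstant g /\ 0 < T /\ (forall t, g (t + T) = g t).

Definition var_sol (W : VF3) (g : R -> R3) (xi : R -> R3) : Prop :=
  forall t, exists L, dderiv W (g t) (xi t) L /\ curve_deriv xi t L.

(* Hyperbolicity of all periodic orbits in A: the monodromy map
   M = Phi(T) on T_p S^2 (p = g 0) fixes W(p); the nontrivial characteristic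
   multiplier (eigenvalue of the map induced on T_p S^2 / span W(p)) is not of
   modulus 1. *)
Definition all_periodic_hyperbolic (W : VF3) (A : R3 -> Prop) : Prop :=
  forall (g : R -> R3) (T : R), periodic_orbit W A g T ->
  forall (v : R3) (xi : R -> R3) (mu c : R),
    tangent (g 0) v -> var_sol W g xi -> xi 0 = v ->
    Rabs mu = 1 ->
    xi T = vadd (vscale mu v) (vscale c (W (g 0))) ->
    exists k, v = vscale k (W (g 0)).

Definition tends_pinf (g : R -> R3) (s : R3) : Prop :=
  forall e, 0 < e -> exists T0, forall t, T0 <= t -> dist2 (g t) s < e.
Definition tends_minf (g : R -> R3) (s : R3) : Prop :=
  forall e, 0 < e -> exists T0, forall t, t <= T0 -> dist2 (g t) s < e.

Definition saddle_connection (W : VF3) (A : R3 -> Prop) (g : R -> R3)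
  : Prop :=
  integral_curve W g /\ (forall t, sphere (g t) /\ A (g t)) /\
  nonconstant g /\
  exists s1 s2, saddle W s1 /\ saddle W s2 /\ A s1 /\ A s2 /\
                tends_minf g s1 /\ tends_pinf g s2.

Definition no_saddle_conn_except_S1 (W : VF3) (A : R3 -> Prop) : Prop :=
  forall g, saddle_connection W A g -> forall t, cz (g t) = 0.

Definition in_S_on (W : VF3) (A : R3 -> Prop) : Prop :=
  (forall q, sphere q -> A q -> W q = v0 -> hyperbolic_sing W q) /\
  all_periodic_hyperbolic W A /\
  no_saddle_conn_except_S1 W A.

Definition Nreg (q : R3) : Prop := 0 < cy q.
Definition Sreg (q : R3) : Prop := cy q < 0.
Definition inD (q : R3) : Prop := sphere q /\ cy q = 0.

(* U f = <grad f, U> *)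
Definition Uf (U : VF3) (p : R3) : R := cy (U p).
Definition U2f (U : VF3) (p : R3) (l : R) : Prop :=
  dderiv_s (fun q => cy (U q)) p (U p) l.

(* det[U,V](p) for tangent vectors at p in S^2 (oriented area form) *)
Definition detUV (U V : VF3) (p : R3) : R := det3 p (U p) (V p).

Definition fold_point (U V : VF3) (p : R3) : Prop :=
  inD p /\
  ((Uf V p <> 0 /\ Uf U p = 0 /\ exists l, U2f U p l /\ l <> 0) \/
   (Uf U p <> 0 /\ Uf V p = 0 /\ exists l, U2f V p l /\ l <> 0)).

Definition filippov_hyp_sing (U V : VF3) (p : R3) : Prop :=
  inD p /\ Uf U p * Uf V p < 0 /\ detUV U V p = 0 /\
  exists th0 l, p = (cos th0, 0, sin th0) /\
    derivable_pt_lim (fun th => detUV U V (cos th, 0, sin th)) th0 l /\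
    l <> 0.

Definition D_regular (U V : VF3) (p : R3) : Prop :=
  0 < Uf U p * Uf V p \/ (Uf U p * Uf V p < 0 /\ detUV U V p <> 0).

Definition D_sing_elementary (U V : VF3) : Prop :=
  forall p, inD p -> ~ D_regular U V p ->
    fold_point U V p \/ filippov_hyp_sing U V p.

Definition G_m1 (m : nat) (X Y : PVF) : Prop :=
  deg_exact m X /\ deg_exact m Y /\
  in_S_on (poinc m X) Nreg /\ in_S_on (poinc m Y) Sreg /\
  D_sing_elementary (poinc m X) (poinc m Y).

Definition smooth (phi : R -> R) : Prop :=
  exists d : nat -> R -> R,
    (forall x, d O x = phi x) /\
    (forall n x, derivable_pt_lim (d n) x (d (S n) x)).

Definition transition_fun (phi : R -> R) : Prop :=
  smooth phi /\
  (forall t, t <= -1 -> phi t = 0) /\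
  (forall t, 1 <= t -> phi t = 1) /\
  (forall t, -1 < t < 1 -> exists l, derivable_pt_lim phi t l /\ 0 < l).

Definition regularization (m : nat) (X Y : PVF) (phi : R -> R) (eps : R)
  : VF3 := fun q =>
  vadd (vscale (1 - phi (cy q / eps)) (poinc m Y q))
       (vscale (phi (cy q / eps)) (poinc m X q)).

From Stdlib Require Import Reals Lra Lia Psatz Classical ClassicalEpsilon FunctionalExtensionality.
Open Scope R_scope.

(* Write U = P(X), V = P(Y); the regularization is the blend
   (1 - Phi) V + Phi U with Phi(q) = phi(y/eps), and its linearization is the
   blend of the Jacobians of U and V plus a rank-one term of size
   phi'(y/eps)/eps in the direction of the jump U - V.  A singular point q is
   hyperbolic unless this linear map has a purely imaginary eigenvalue on
   T_q S^2, which forces its determinant or its trace to vanish.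
   - Outside the band |y| < eps the regularization coincides to first order
     with U (above) or V (below), and Z in G_m(1) gives hyperbolicity.
   - Inside the band, eps times the trace and eps times the determinant are
     dominated by the rank-one term.  If degenerate zeros existed for
     arbitrarily small eps, a compactness argument would produce a point of D
     where a convex combination of U and V vanishes and where the rescaled
     trace or determinant tends to 0; but such a point is a hyperbolic
     singular point of the Filippov field, whose nondegeneracy makes both
     limits nonzero. *)

Lemma R3_eq (p q : R3) : cx p = cx q -> cy p = cy q -> cz p = cz q -> p = q.
Proof. destruct p as [[a b] c], q as [[a' b'] c']; unfold cx, cy, cz; simpl; intros; subst; reflexivity. Qed.

Ltac r3_ring := apply R3_eq; unfold vadd, vscale, v0, cx, cy, cz; simpl; ring.

Lemma det3_add_scale_l q a k b c : det3 q (vadd a (vscale k b)) c = det3 q a c + k * det3 q b c.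
Proof. unfold det3, vadd, vscale, cx, cy, cz; simpl; ring. Qed.
Lemma det3_add_scale_r q a b k c : det3 q a (vadd b (vscale k c)) = det3 q a b + k * det3 q a c.
Proof. unfold det3, vadd, vscale, cx, cy, cz; simpl; ring. Qed.
Lemma det3_comb_l q a b al be c :
  det3 q (vadd (vscale al a) (vscale be b)) c = al * det3 q a c + be * det3 q b c.
Proof. unfold det3, vadd, vscale, cx, cy, cz; simpl; ring. Qed.
Lemma det3_comb_r q a b c al be :
  det3 q a (vadd (vscale al b) (vscale be c)) = al * det3 q a b + be * det3 q a c.
Proof. unfold det3, vadd, vscale, cx, cy, cz; simpl; ring. Qed.
Lemma det3_scale_l q k a b : det3 q (vscale k a) b = k * det3 q a b.
Proof. unfold det3, vscale, cx, cy, cz; simpl; ring. Qed.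
Lemma det3_scale_r q a k b : det3 q a (vscale k b) = k * det3 q a b.
Proof. unfold det3, vscale, cx, cy, cz; simpl; ring. Qed.
Lemma det3_swap q a b : det3 q a b = - det3 q b a.
Proof. unfold det3; ring. Qed.
Lemma det3_diag q a : det3 q a a = 0.
Proof. unfold det3; ring. Qed.
Lemma det3_pluecker q r b a s :
  det3 q r b * det3 q a s - det3 q s b * det3 q a r = det3 q a b * det3 q r s.
Proof. unfold det3; ring. Qed.

Lemma div_lower a y e : 0 < e -> a * e <= y -> a <= y / e.
Proof. intros He H. apply (Rmult_le_reg_r e); [lra|]. unfold Rdiv; rewrite Rmult_assoc, Rinv_l, Rmult_1_r; lra. Qed.

Lemma div_upper b y e : 0 < e -> y <= b * e -> y / e <= b.
Proof. intros He H. apply (Rmult_le_reg_r e); [lra|]. unfold Rdiv; rewrite Rmult_assoc, Rinv_l, Rmult_1_r; lra. Qed.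

Lemma sphere_bound q : sphere q -> -1 <= cx q <= 1 /\ -1 <= cy q <= 1 /\ -1 <= cz q <= 1.
Proof. unfold sphere; intros H. repeat split; nra. Qed.

Lemma dpl_ext (f g : R -> R) x l :
  (forall y, f y = g y) -> derivable_pt_lim f x l -> derivable_pt_lim g x l.
Proof. intros E H. replace g with f; auto. apply functional_extensionality; auto. Qed.

Lemma dpl_val (f : R -> R) x l1 l2 : l1 = l2 -> derivable_pt_lim f x l1 -> derivable_pt_lim f x l2.
Proof. intros ->; auto. Qed.

Lemma deriv_const_right f t l :
  derivable_pt_lim f t l -> (forall h, 0 < h -> f (t + h) = f t) -> l = 0.
Proof.
  intros Hd Hc. destruct (Req_dec l 0) as [|Hl]; auto. exfalso.
  destruct (Hd (Rabs l) (Rabs_pos_lt _ Hl)) as [del Hdel].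
  assert (Hp : 0 < del / 2) by (destruct del; simpl; lra).
  specialize (Hdel (del/2) ltac:(lra)). rewrite Rabs_pos_eq in Hdel by lra.
  specialize (Hdel ltac:(destruct del; simpl in *; lra)). rewrite Hc in Hdel by auto.
  replace ((f t - f t) / (del / 2) - l) with (- l) in Hdel by (field; lra).
  rewrite Rabs_Ropp in Hdel; lra.
Qed.

Lemma deriv_const_left f t l :
  derivable_pt_lim f t l -> (forall h, h < 0 -> f (t + h) = f t) -> l = 0.
Proof.
  intros Hd Hc. destruct (Req_dec l 0) as [|Hl]; auto. exfalso.
  destruct (Hd (Rabs l) (Rabs_pos_lt _ Hl)) as [del Hdel].
  assert (Hp : 0 < del / 2) by (destruct del; simpl; lra).
  specialize (Hdel (- (del/2)) ltac:(lra)). rewrite Rabs_Ropp, Rabs_pos_eq in Hdel by lra.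
  specialize (Hdel ltac:(destruct del; simpl in *; lra)). rewrite Hc in Hdel by lra.
  replace ((f t - f t) / - (del / 2) - l) with (- l) in Hdel by (field; lra).
  rewrite Rabs_Ropp in Hdel; lra.
Qed.

(* C^1 functions on R^3.  A function [f : R3 -> R] is C^1 with gradient [G]
   when the chain rule [(f o g)'(t) = G(g t) . g'(t)] holds along every
   differentiable curve and [f] and the components of [G] are sequentially
   continuous.  This class contains the coordinates and is closed under sums
   and products, hence contains every polynomial; it is all the regularity
   the proof uses. *)

Definition has_grad (f : R3 -> R) (G : R3 -> R3) : Prop :=
  forall g t L, curve_deriv g t L -> derivable_pt_lim (fun s => f (g s)) t (dot (G (g t)) L).

Definition cv3 (qn : nat -> R3) (p : R3) : Prop :=
  Un_cv (fun n => cx (qn n)) (cx p) /\ Un_cv (fun n => cy (qn n)) (cy p) /\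
  Un_cv (fun n => cz (qn n)) (cz p).

Definition seq_cont (f : R3 -> R) : Prop := forall qn p, cv3 qn p -> Un_cv (fun n => f (qn n)) (f p).

Definition C1 (f : R3 -> R) (G : R3 -> R3) : Prop :=
  has_grad f G /\ seq_cont f /\
  seq_cont (fun p => cx (G p)) /\ seq_cont (fun p => cy (G p)) /\ seq_cont (fun p => cz (G p)).

Definition is_C1 (f : R3 -> R) : Prop := exists G, C1 f G.

Lemma cv_const (c : R) : Un_cv (fun _ => c) c.
Proof. intros e He; exists 0%nat; intros; unfold Rdist; rewrite Rminus_diag, Rabs_R0; auto. Qed.

Lemma cv_ext (u v : nat -> R) l : (forall n, u n = v n) -> Un_cv u l -> Un_cv v l.
Proof. intros E H e He; destruct (H e He) as [N HN]; exists N; intros; rewrite <- E; auto. Qed.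

Lemma cv_eq u l l' : Un_cv u l -> l = l' -> Un_cv u l'.
Proof. intros H ->; auto. Qed.

Ltac cv_arith :=
  repeat first [ assumption | apply CV_minus | apply CV_plus | apply CV_mult | apply CV_opp | apply cv_const ].

Lemma seq_cont_const c : seq_cont (fun _ => c).
Proof. intros qn p _; apply cv_const. Qed.
Lemma seq_cont_plus f g : seq_cont f -> seq_cont g -> seq_cont (fun p => f p + g p).
Proof. intros Hf Hg qn p H; apply CV_plus; auto. Qed.
Lemma seq_cont_mult f g : seq_cont f -> seq_cont g -> seq_cont (fun p => f p * g p).
Proof. intros Hf Hg qn p H; apply CV_mult; auto. Qed.

Lemma has_grad_ext f g G : (forall p, f p = g p) -> has_grad f G -> has_grad g G.
Proof. intros E H c t L HL. apply (dpl_ext (fun s => f (c s))); auto. Qed.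

Lemma has_grad_const a : has_grad (fun _ => a) (fun _ => v0).
Proof.
  intros g t L _. apply (dpl_val _ _ 0); [unfold dot, v0, cx, cy, cz; simpl; ring|].
  apply derivable_pt_lim_const.
Qed.

Lemma has_grad_plus f g F G :
  has_grad f F -> has_grad g G -> has_grad (fun p => f p + g p) (fun p => vadd (F p) (G p)).
Proof.
  intros Hf Hg c t L HL.
  eapply dpl_val; [|apply (derivable_pt_lim_plus _ _ _ _ _ (Hf c t L HL) (Hg c t L HL))].
  unfold dot, vadd, cx, cy, cz; simpl; ring.
Qed.

Lemma has_grad_mult f g F G : has_grad f F -> has_grad g G ->
  has_grad (fun p => f p * g p) (fun p => vadd (vscale (g p) (F p)) (vscale (f p) (G p))).
Proof.
  intros Hf Hg c t L HL.
  eapply dpl_val; [|apply (derivable_pt_lim_mult _ _ _ _ _ (Hf c t L HL) (Hg c t L HL))].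
  unfold dot, vadd, vscale, cx, cy, cz; simpl; ring.
Qed.

Lemma is_C1_ext f g : (forall p, f p = g p) -> is_C1 f -> is_C1 g.
Proof.
  intros E [G [H1 [H2 H3]]]; exists G; split; [eapply has_grad_ext; eauto|split; auto].
  intros qn p Hc. apply (cv_ext (fun n => f (qn n))); [auto|]. rewrite <- E; auto.
Qed.

Lemma is_C1_const a : is_C1 (fun _ => a).
Proof. exists (fun _ => v0); repeat split; try apply has_grad_const; apply seq_cont_const. Qed.

Lemma is_C1_cx : is_C1 cx.
Proof.
  exists (fun _ => (1,0,0)); repeat split; try apply seq_cont_const; [|intros qn p H; apply H].
  intros g t L [H _]. eapply dpl_val; [|exact H]. unfold dot, cx, cy, cz; simpl; ring.
Qed.
Lemma is_C1_cy : is_C1 cy.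
Proof.
  exists (fun _ => (0,1,0)); repeat split; try apply seq_cont_const; [|intros qn p H; apply H].
  intros g t L [_ [H _]]. eapply dpl_val; [|exact H]. unfold dot, cx, cy, cz; simpl; ring.
Qed.
Lemma is_C1_cz : is_C1 cz.
Proof.
  exists (fun _ => (0,0,1)); repeat split; try apply seq_cont_const; [|intros qn p H; apply H].
  intros g t L [_ [_ H]]. eapply dpl_val; [|exact H]. unfold dot, cx, cy, cz; simpl; ring.
Qed.

Lemma is_C1_plus f g : is_C1 f -> is_C1 g -> is_C1 (fun p => f p + g p).
Proof.
  intros [F [A1 [A2 [A3 [A4 A5]]]]] [G [B1 [B2 [B3 [B4 B5]]]]].
  exists (fun p => vadd (F p) (G p)); repeat split;
    [apply has_grad_plus; auto|apply seq_cont_plus; auto|..];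
    unfold vadd, cx, cy, cz; simpl; apply seq_cont_plus; auto.
Qed.

Lemma is_C1_mult f g : is_C1 f -> is_C1 g -> is_C1 (fun p => f p * g p).
Proof.
  intros [F [A1 [A2 [A3 [A4 A5]]]]] [G [B1 [B2 [B3 [B4 B5]]]]].
  exists (fun p => vadd (vscale (g p) (F p)) (vscale (f p) (G p))); repeat split;
    [apply has_grad_mult; auto|apply seq_cont_mult; auto|..];
    unfold vadd, vscale, cx, cy, cz; simpl; apply seq_cont_plus; apply seq_cont_mult; auto.
Qed.

Lemma is_C1_pow f n : is_C1 f -> is_C1 (fun p => f p ^ n).
Proof.
  intros Hf; induction n.
  - apply (is_C1_ext (fun _ => 1)); [intros; simpl; ring|apply is_C1_const].
  - apply (is_C1_ext (fun p => f p * f p ^ n)); [intros; simpl; ring|apply is_C1_mult; auto].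
Qed.

Lemma is_C1_sum (F : nat -> R3 -> R) :
  (forall i, is_C1 (F i)) -> forall n, is_C1 (fun p => sum_f_R0 (fun i => F i p) n).
Proof.
  intros H n; induction n; simpl; auto.
  apply (is_C1_plus (fun p => sum_f_R0 (fun i => F i p) n) (F (S n))); auto.
Qed.

Lemma is_C1_hom_eval m (c : Poly2) : is_C1 (fun q => hom_eval m c (cx q) (cy q) (cz q)).
Proof.
  unfold hom_eval.
  apply (is_C1_sum (fun i q => sum_f_R0 (fun j => c i j * cx q ^ i * cy q ^ j * cz q ^ (m - i - j)) (m - i))).
  intro i. apply (is_C1_sum (fun j q => c i j * cx q ^ i * cy q ^ j * cz q ^ (m - i - j))).
  intro j. repeat apply is_C1_mult; try apply is_C1_pow;
    auto using is_C1_const, is_C1_cx, is_C1_cy, is_C1_cz.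
Qed.

Ltac C1_tac := repeat first [ assumption | apply is_C1_const | apply is_C1_cx | apply is_C1_cy
   | apply is_C1_cz | apply is_C1_pow | apply is_C1_plus | apply is_C1_mult ].

Lemma is_C1_poinc m X :
  is_C1 (fun q => cx (poinc m X q)) /\ is_C1 (fun q => cy (poinc m X q)) /\
  is_C1 (fun q => cz (poinc m X q)).
Proof.
  pose proof (is_C1_hom_eval m (pP X)) as HP. pose proof (is_C1_hom_eval m (pQ X)) as HQ.
  set (P := fun q => hom_eval m (pP X) (cx q) (cy q) (cz q)) in HP.
  set (Q := fun q => hom_eval m (pQ X) (cx q) (cy q) (cz q)) in HQ.
  repeat split.
  - apply (is_C1_ext (fun q => (1 + (-1) * cx q ^ 2) * P q + (-1) * (cx q * cy q * Q q)));
      [intros q; unfold poinc, P, Q, cx; simpl; ring|C1_tac].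
  - apply (is_C1_ext (fun q => (-1) * cx q * cy q * P q + (1 + (-1) * cy q ^ 2) * Q q));
      [intros q; unfold poinc, P, Q, cx, cy; simpl; ring|C1_tac].
  - apply (is_C1_ext (fun q => (-1) * cz q * (cx q * P q + cy q * Q q)));
      [intros q; unfold poinc, P, Q, cx, cy, cz; simpl; ring|C1_tac].
Qed.

Definition transition_data (phi dphi : R -> R) : Prop :=
  (forall t, derivable_pt_lim phi t (dphi t)) /\
  (forall t, continuity_pt phi t) /\ (forall t, continuity_pt dphi t) /\
  (forall t, -1 < t < 1 -> 0 < dphi t) /\
  (forall t, 1 <= t -> dphi t = 0) /\ (forall t, t <= -1 -> dphi t = 0) /\
  (forall t, 1 <= t -> phi t = 1) /\ (forall t, t <= -1 -> phi t = 0) /\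
  (forall t, -1 <= t <= 1 -> 0 <= phi t <= 1).

Lemma transition_fun_data phi : transition_fun phi -> exists dphi, transition_data phi dphi.
Proof.
  intros [[d [H0 H]] [Hl [Hr Hpos]]].
  assert (Hder : forall t, derivable_pt_lim phi t (d 1%nat t)).
  { replace phi with (d O) by (apply functional_extensionality; auto). apply H. }
  assert (Hp : forall t, -1 < t < 1 -> 0 < d 1%nat t).
  { intros t Ht. destruct (Hpos t Ht) as [l [Hl1 Hl2]].
    rewrite (uniqueness_limite phi t (d 1%nat t) l); auto. }
  exists (d 1%nat). repeat split; auto.
  - intro t. apply derivable_continuous_pt. exists (d 1%nat t). apply Hder.
  - intro t. apply derivable_continuous_pt. exists (d 2%nat t). apply H.
  - intros t Ht. apply (deriv_const_right phi t); auto. intros h Hh; rewrite !Hr; lra.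
  - intros t Ht. apply (deriv_const_left phi t); auto. intros h Hh; rewrite !Hl; lra.
  - destruct (Req_dec t (-1)) as [->|Hne]; [rewrite Hl; lra|].
    destruct (MVT_cor2 phi (d 1%nat) (-1) t ltac:(lra) ltac:(intros; auto)) as [c [Hc1 Hc2]].
    assert (0 < d 1%nat c) by (apply Hp; lra). rewrite (Hl (-1)) in Hc1 by lra. nra.
  - destruct (Req_dec t 1) as [->|Hne]; [rewrite Hr; lra|].
    destruct (MVT_cor2 phi (d 1%nat) t 1 ltac:(lra) ltac:(intros; auto)) as [c [Hc1 Hc2]].
    assert (0 < d 1%nat c) by (apply Hp; lra). rewrite (Hr 1) in Hc1 by lra. nra.
Qed.

(* Away from the poles
   (0,±1,0) the vectors [frame1 q] and [frame2 q] form a basis of T_q S^2.  A linear map of T_q S^2 with a purely imaginary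
   eigenvalue i b has vanishing determinant (b = 0) or vanishing trace
   (b <> 0).  Coordinates in the frame are read off with triple products, so
   [mat_det] and [mat_tr] are the determinant and trace of the matrix of the
   map, multiplied by a positive power of Delta = det(q, frame1 q, frame2 q). *)

Definition frame1 (q : R3) : R3 := (- cz q, 0, cx q).
Definition frame2 (q : R3) : R3 := (cx q * cy q, - (cx q ^ 2 + cz q ^ 2), cy q * cz q).

Definition linear_map (M : R3 -> R3) : Prop :=
  forall al be a b, M (vadd (vscale al a) (vscale be b)) = vadd (vscale al (M a)) (vscale be (M b)).

Definition mat11 (M : R3 -> R3) (q : R3) : R := det3 q (M (frame1 q)) (frame2 q).
Definition mat21 (M : R3 -> R3) (q : R3) : R := det3 q (frame1 q) (M (frame1 q)).
Definition mat12 (M : R3 -> R3) (q : R3) : R := det3 q (M (frame2 q)) (frame2 q).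
Definition mat22 (M : R3 -> R3) (q : R3) : R := det3 q (frame1 q) (M (frame2 q)).
Definition mat_det (M : R3 -> R3) (q : R3) : R := mat11 M q * mat22 M q - mat12 M q * mat21 M q.
Definition mat_tr (M : R3 -> R3) (q : R3) : R := mat11 M q + mat22 M q.

Lemma frame_det q :
  det3 q (frame1 q) (frame2 q) = (cx q ^ 2 + cz q ^ 2) * (cx q ^ 2 + cy q ^ 2 + cz q ^ 2).
Proof. unfold det3, frame1, frame2, cx, cy, cz; simpl; ring. Qed.

Lemma frame_det_nonzero q : sphere q -> cy q ^ 2 < 1 -> det3 q (frame1 q) (frame2 q) <> 0.
Proof. unfold sphere; intros Hs Hy. rewrite frame_det, Hs. nra. Qed.

(* Cramer's rule in the frame: the coordinates of a tangent vector. *)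
Lemma frame_decomp q w : sphere q -> cy q ^ 2 < 1 -> tangent q w ->
  w = vadd (vscale (det3 q w (frame2 q) / det3 q (frame1 q) (frame2 q)) (frame1 q))
           (vscale (det3 q (frame1 q) w / det3 q (frame1 q) (frame2 q)) (frame2 q)).
Proof.
  intros Hs Hy Ht. pose proof (frame_det_nonzero q Hs Hy) as HD.
  unfold sphere, tangent in *. rewrite frame_det, Hs, Rmult_1_r in *.
  set (D := cx q ^ 2 + cz q ^ 2) in *.
  (* D w = (coordinates) . frame, using |q|^2 = 1 and q . w = 0 *)
  assert (Hw : forall k : R3 -> R, k = cx \/ k = cy \/ k = cz ->
    D * k w = det3 q w (frame2 q) * k (frame1 q) + det3 q (frame1 q) w * k (frame2 q)).
  { intros k Hk. transitivity (D * ((cx q ^ 2 + cy q ^ 2 + cz q ^ 2) * k w - dot q w * k q));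
      [rewrite Hs, Ht; ring|].
    destruct Hk as [ -> | [ -> | -> ] ]; unfold D, dot, det3, frame1, frame2, cx, cy, cz; simpl; ring. }
  assert (Hk : forall k : R3 -> R, k = cx \/ k = cy \/ k = cz ->
    k w = det3 q w (frame2 q) / D * k (frame1 q) + det3 q (frame1 q) w / D * k (frame2 q)).
  { intros k Hk. apply (Rmult_eq_reg_l D); auto. rewrite (Hw k Hk). field; auto. }
  apply R3_eq; [apply (Hk cx)|apply (Hk cy)|apply (Hk cz)]; auto.
Qed.

(* A real 2x2 matrix with eigenvalue i B (eigenvector (U1,U2) + i (V1,V2))
   has determinant 0 or trace 0.  By Cayley-Hamilton, P = det - B^2 and
   Q = B tr satisfy P U + Q V = 0 and P V - Q U = 0, whence P = Q = 0. *)
Lemma imaginary_eigenvalue_2x2 m11 m12 m21 m22 U1 U2 V1 V2 B :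
  m11*U1 + m12*U2 + B*V1 = 0 -> m21*U1 + m22*U2 + B*V2 = 0 ->
  m11*V1 + m12*V2 - B*U1 = 0 -> m21*V1 + m22*V2 - B*U2 = 0 ->
  ~ (U1 = 0 /\ U2 = 0 /\ V1 = 0 /\ V2 = 0) ->
  m11*m22 - m12*m21 = 0 \/ m11 + m22 = 0.
Proof.
  intros e1 e2 e3 e4 Hn.
  set (P := m11*m22 - m12*m21 - B^2). set (Q := B*(m11+m22)).
  assert (a1 : P*U1 + Q*V1 = 0).
  { transitivity (m22*(m11*U1 + m12*U2 + B*V1) - m12*(m21*U1 + m22*U2 + B*V2)
                  + B*(m11*V1 + m12*V2 - B*U1)); [unfold P, Q; ring|rewrite e1, e2, e3; ring]. }
  assert (a2 : P*U2 + Q*V2 = 0).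
  { transitivity (- m21*(m11*U1 + m12*U2 + B*V1) + m11*(m21*U1 + m22*U2 + B*V2)
                  + B*(m21*V1 + m22*V2 - B*U2)); [unfold P, Q; ring|rewrite e1, e2, e4; ring]. }
  assert (a3 : P*V1 - Q*U1 = 0).
  { transitivity (m22*(m11*V1 + m12*V2 - B*U1) - m12*(m21*V1 + m22*V2 - B*U2)
                  - B*(m11*U1 + m12*U2 + B*V1)); [unfold P, Q; ring|rewrite e1, e3, e4; ring]. }
  assert (a4 : P*V2 - Q*U2 = 0).
  { transitivity (- m21*(m11*V1 + m12*V2 - B*U1) + m11*(m21*V1 + m22*V2 - B*U2)
                  - B*(m21*U1 + m22*U2 + B*V2)); [unfold P, Q; ring|rewrite e2, e3, e4; ring]. }
  assert (HPQ : P = 0 /\ Q = 0).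
  { destruct (Req_dec (P^2+Q^2) 0) as [H0|H0]; [split; nra|].
    exfalso; apply Hn.
    assert (kill : forall x y, P*x + Q*y = 0 -> P*y - Q*x = 0 -> x = 0 /\ y = 0).
    { intros x y Hx Hy. split; apply (Rmult_eq_reg_l (P^2+Q^2)); auto.
      - transitivity (P*(P*x+Q*y) - Q*(P*y - Q*x)); [ring|rewrite Hx, Hy; ring].
      - transitivity (Q*(P*x+Q*y) + P*(P*y - Q*x)); [ring|rewrite Hx, Hy; ring]. }
    destruct (kill U1 V1 a1 a3), (kill U2 V2 a2 a4); auto. }
  destruct HPQ as [HP HQ]. unfold P, Q in *.
  destruct (Req_dec B 0) as [->|HB]; [left; nra|].
  right. apply (Rmult_eq_reg_l B); auto. rewrite Rmult_0_r; auto.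
Qed.

Lemma tangent_imaginary_eigenvalue M q b u v : linear_map M -> sphere q -> cy q ^ 2 < 1 ->
  tangent q u -> tangent q v ->
  M u = vscale (- b) v -> M v = vscale b u -> ~ (u = v0 /\ v = v0) ->
  mat_det M q = 0 \/ mat_tr M q = 0.
Proof.
  intros Hl Hs Hy Htu Htv Hu Hv Hn.
  set (D := det3 q (frame1 q) (frame2 q)).
  assert (HD : D <> 0) by (apply frame_det_nonzero; auto).
  pose proof (frame_decomp q u Hs Hy Htu) as Du. pose proof (frame_decomp q v Hs Hy Htv) as Dv.
  fold D in Du, Dv.
  set (U1 := det3 q u (frame2 q)) in *. set (U2 := det3 q (frame1 q) u) in *.
  set (V1 := det3 q v (frame2 q)) in *. set (V2 := det3 q (frame1 q) v) in *.
  assert (coord : forall w c1 c2 k z, w = vadd (vscale (c1/D) (frame1 q)) (vscale (c2/D) (frame2 q)) ->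
      M w = vscale k z ->
      c1 * mat11 M q + c2 * mat12 M q - D * k * det3 q z (frame2 q) = 0 /\
      c1 * mat21 M q + c2 * mat22 M q - D * k * det3 q (frame1 q) z = 0).
  { intros w c1 c2 k z Hw HM. rewrite Hw, Hl in HM. unfold mat11, mat12, mat21, mat22.
    pose proof (f_equal (fun x => det3 q x (frame2 q)) HM) as E1.
    pose proof (f_equal (fun x => det3 q (frame1 q) x) HM) as E2. simpl in E1, E2.
    rewrite det3_comb_l, det3_scale_l in E1. rewrite det3_comb_r, det3_scale_r in E2.
    split.
    - transitivity (D * (c1 / D * det3 q (M (frame1 q)) (frame2 q)
        + c2 / D * det3 q (M (frame2 q)) (frame2 q) - k * det3 q z (frame2 q))); [field; auto|].
      rewrite E1; ring.
    - transitivity (D * (c1 / D * det3 q (frame1 q) (M (frame1 q))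
        + c2 / D * det3 q (frame1 q) (M (frame2 q)) - k * det3 q (frame1 q) z)); [field; auto|].
      rewrite E2; ring. }
  destruct (coord u U1 U2 (- b) v Du Hu) as [E1 E2].
  destruct (coord v V1 V2 b u Dv Hv) as [E3 E4].
  fold V1 V2 in E1, E2. fold U1 U2 in E3, E4.
  apply (imaginary_eigenvalue_2x2 _ _ _ _ U1 U2 V1 V2 (b * D)); try lra.
  intros [h1 [h2 [h3 h4]]]. apply Hn. rewrite Du, Dv, h1, h2, h3, h4.
  split; apply R3_eq; unfold v0, vadd, vscale, cx, cy, cz; simpl; field; auto.
Qed.

Record C1field := mkC1field { vf : VF3; grad_x : R3 -> R3; grad_y : R3 -> R3; grad_z : R3 -> R3 }.

Definition C1field_ok (U : C1field) : Prop :=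
  C1 (fun q => cx (vf U q)) (grad_x U) /\ C1 (fun q => cy (vf U q)) (grad_y U) /\
  C1 (fun q => cz (vf U q)) (grad_z U).

Definition jac (U : C1field) (q w : R3) : R3 := (dot (grad_x U q) w, dot (grad_y U q) w, dot (grad_z U q) w).

Lemma poinc_C1field m X : exists U, vf U = poinc m X /\ C1field_ok U.
Proof.
  destruct (is_C1_poinc m X) as [[G1 H1] [[G2 H2] [G3 H3]]].
  exists (mkC1field (poinc m X) G1 G2 G3). split; [reflexivity|]. split; [|split]; simpl; auto.
Qed.

Lemma line_deriv q u : curve_deriv (fun s => vadd q (vscale s u)) 0 u.
Proof.
  assert (Hlin : forall a b, derivable_pt_lim (fun s => a + s * b) 0 b).
  { intros a b. pose proof (derivable_pt_lim_plus _ _ 0 _ _ (derivable_pt_lim_const a 0)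
      (derivable_pt_lim_scal id b 0 _ (derivable_pt_lim_id 0))) as H.
    eapply dpl_val; [|eapply dpl_ext; [|exact H]]; [ring|].
    intros; unfold plus_fct, fct_cte, mult_real_fct, id; ring. }
  repeat split; apply Hlin.
Qed.

Lemma has_grad_dderiv_s f G q u : has_grad f G -> dderiv_s f q u (dot (G q) u).
Proof.
  intros H. unfold dderiv_s. pose proof (H _ 0 u (line_deriv q u)) as H1. cbv beta in H1.
  replace (vadd q (vscale 0 u)) with q in H1 by r3_ring. exact H1.
Qed.

Lemma has_grad_dderiv_s_eq f G q u l : has_grad f G -> dderiv_s f q u l -> l = dot (G q) u.
Proof. intros H Hl. eapply uniqueness_limite; [exact Hl|apply has_grad_dderiv_s; auto]. Qed.

Lemma jac_dderiv U q u : C1field_ok U -> dderiv (vf U) q u (jac U q u).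
Proof. intros [[H1 _] [[H2 _] [H3 _]]]. repeat split; apply has_grad_dderiv_s; auto. Qed.

Lemma has_grad_gext f G G' : (forall p w, dot (G p) w = dot (G' p) w) -> has_grad f G -> has_grad f G'.
Proof. intros E H g t L HL. rewrite <- E. auto. Qed.

Definition blend (U V : VF3) (Phi : R3 -> R) : VF3 := fun q =>
  vadd (vscale (1 - Phi q) (V q)) (vscale (Phi q) (U q)).

Lemma regularization_blend m X Y phi eps :
  regularization m X Y phi eps = blend (poinc m X) (poinc m Y) (fun q => phi (cy q / eps)).
Proof. reflexivity. Qed.

Definition jump (U V : C1field) (q : R3) : R3 := vadd (vf U q) (vscale (-1) (vf V q)).
Definition jac_blend (U V : C1field) (s : R) (q w : R3) : R3 :=
  vadd (vscale (1 - s) (jac V q w)) (vscale s (jac U q w)).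

(* The linearization of the regularized field: the blend of the two Jacobians
   plus the rank-one term coming from the derivative of Phi, of size dphi/eps. *)
Definition Dreg (U V : C1field) (phi dphi : R -> R) (eps : R) (q w : R3) : R3 :=
  vadd (jac_blend U V (phi (cy q / eps)) q w) (vscale (dphi (cy q / eps) / eps * cy w) (jump U V q)).

Lemma Dreg_linear U V phi dphi eps q : linear_map (Dreg U V phi dphi eps q).
Proof. intros al be a b. apply R3_eq; unfold Dreg, jac_blend, jump, jac, dot, vadd, vscale, cx, cy, cz; simpl; ring. Qed.

Lemma has_grad_Phi phi dphi eps : eps <> 0 -> (forall t, derivable_pt_lim phi t (dphi t)) ->
  has_grad (fun q => phi (cy q / eps)) (fun q => (0, dphi (cy q / eps) / eps, 0)).
Proof.
  intros He Hd g t L [_ [Hy _]].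
  assert (H1 : derivable_pt_lim (fun s => cy (g s) / eps) t (cy L / eps)).
  { pose proof (derivable_pt_lim_scal _ (/eps) t _ Hy) as H.
    eapply dpl_val; [|eapply dpl_ext; [|exact H]]; [unfold Rdiv; ring|].
    intros; unfold mult_real_fct, Rdiv; ring. }
  pose proof (derivable_pt_lim_comp _ phi t _ _ H1 (Hd _)) as H2.
  eapply dpl_val; [|exact H2]. unfold dot, cx, cy, cz; simpl. field; auto.
Qed.

Lemma has_grad_blend (u v Phi : R3 -> R) Gu Gv GP :
  has_grad u Gu -> has_grad v Gv -> has_grad Phi GP ->
  has_grad (fun q => (1 - Phi q) * v q + Phi q * u q)
    (fun q => vadd (vadd (vscale (1 - Phi q) (Gv q)) (vscale (Phi q) (Gu q))) (vscale (u q - v q) (GP q))).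
Proof.
  intros Hu Hv HP.
  pose proof (has_grad_plus _ _ _ _
    (has_grad_mult _ _ _ _ (has_grad_plus _ _ _ _ (has_grad_const 1)
       (has_grad_mult _ _ _ _ (has_grad_const (-1)) HP)) Hv)
    (has_grad_mult _ _ _ _ HP Hu)) as H.
  eapply has_grad_ext; [|eapply has_grad_gext; [|exact H]]; [intros; simpl; ring|].
  intros p w. unfold dot, vadd, vscale, v0, cx, cy, cz; simpl; ring.
Qed.

Lemma dderiv_blend U V phi dphi eps q u L :
  C1field_ok U -> C1field_ok V -> eps <> 0 -> (forall t, derivable_pt_lim phi t (dphi t)) ->
  dderiv (blend (vf U) (vf V) (fun q => phi (cy q / eps))) q u L -> L = Dreg U V phi dphi eps q u.
Proof.
  intros [[HU1 _] [[HU2 _] [HU3 _]]] [[HV1 _] [[HV2 _] [HV3 _]]] He Hd [E1 [E2 E3]].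
  pose proof (has_grad_Phi phi dphi eps He Hd) as HP.
  apply R3_eq.
  - rewrite (has_grad_dderiv_s_eq _ _ _ _ _ (has_grad_blend _ _ _ _ _ _ HU1 HV1 HP) E1).
    unfold Dreg, jac_blend, jump, jac, dot, vadd, vscale, cx, cy, cz; simpl; field; auto.
  - rewrite (has_grad_dderiv_s_eq _ _ _ _ _ (has_grad_blend _ _ _ _ _ _ HU2 HV2 HP) E2).
    unfold Dreg, jac_blend, jump, jac, dot, vadd, vscale, cx, cy, cz; simpl; field; auto.
  - rewrite (has_grad_dderiv_s_eq _ _ _ _ _ (has_grad_blend _ _ _ _ _ _ HU3 HV3 HP) E3).
    unfold Dreg, jac_blend, jump, jac, dot, vadd, vscale, cx, cy, cz; simpl; field; auto.
Qed.

(* If (1 - s) V(p) + s U(p) = 0 at a point p of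
   D with 0 < s < 1, the two fields are antiparallel there, so p is a D-singularity; being elementary
   it must be a hyperbolic singular point of the Filippov field.  Its
   nondegeneracy says that the blended Jacobian moves the common direction of
   U and V transversally along D. *)

Lemma U2f_at_zero W p l : W p = v0 -> U2f W p l -> l = 0.
Proof.
  intros Hw H. unfold U2f, dderiv_s in H. rewrite Hw in H.
  assert (H' : derivable_pt_lim (fct_cte (cy (W p))) 0 l).
  { eapply dpl_ext; [|exact H]. intros y. unfold fct_cte. do 2 f_equal. r3_ring. }
  eapply uniqueness_limite; [exact H'|apply derivable_pt_lim_const].
Qed.

(* Neither field vanishes on D: a zero would be a non-elementary D-singularity. *)
Lemma fields_nonvanishing_on_D U V p : D_sing_elementary U V -> inD p -> U p <> v0 /\ V p <> v0.
Proof.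
  intros HD Hp. split; intro Hz.
  - assert (Hu : Uf U p = 0) by (unfold Uf; rewrite Hz; reflexivity).
    destruct (HD p Hp) as [[_ [[_ [_ [l [Hl1 Hl2]]]]|[Hne _]]]|[_ [Hneg _]]].
    + unfold D_regular; rewrite Hu; intros [H|[H _]]; lra.
    + apply Hl2; eapply U2f_at_zero; eauto.
    + auto.
    + rewrite Hu in Hneg; lra.
  - assert (Hv : Uf V p = 0) by (unfold Uf; rewrite Hz; reflexivity).
    destruct (HD p Hp) as [[_ [[Hne _]|[_ [_ [l [Hl1 Hl2]]]]]]|[_ [Hneg _]]].
    + unfold D_regular; rewrite Hv; intros [H|[H _]]; lra.
    + auto.
    + apply Hl2; eapply U2f_at_zero; eauto.
    + rewrite Hv in Hneg; lra.
Qed.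

Lemma antiparallel_on_D U V p la : D_sing_elementary U V -> inD p -> 0 < la ->
  V p = vscale (- la) (U p) -> cy (U p) <> 0 /\ filippov_hyp_sing U V p.
Proof.
  intros HD Hp Hla HV.
  assert (Huy : cy (U p) <> 0).
  { intro H0. assert (Hu : Uf U p = 0) by exact H0.
    assert (Hv : Uf V p = 0) by (unfold Uf; rewrite HV; unfold vscale, cy; simpl; fold (cy (U p)); rewrite H0; ring).
    destruct (HD p Hp) as [[_ [[Hne _]|[Hne _]]]|[_ [Hneg _]]]; auto.
    - unfold D_regular; rewrite Hu, Hv; intros [H|[H _]]; lra.
    - rewrite Hu, Hv in Hneg; lra. }
  assert (Hprod : Uf U p * Uf V p < 0).
  { unfold Uf; rewrite HV; unfold vscale, cy; simpl; fold (cy (U p)).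
    assert (0 < cy (U p) * cy (U p)) by (apply Rsqr_pos_lt; auto). nra. }
  split; [auto|].
  destruct (HD p Hp) as [[_ [[_ [H _]]|[_ [H _]]]]|Hf]; auto.
  - unfold D_regular; intros [H|[_ H]]; [lra|]. apply H.
    unfold detUV; rewrite HV. unfold det3, vscale, cx, cy, cz; simpl; ring.
  - exfalso; rewrite H in Hprod; lra.
  - exfalso; rewrite H in Hprod; lra.
Qed.

Lemma curve_det3 a a' b b' c c' t :
  curve_deriv a t a' -> curve_deriv b t b' -> curve_deriv c t c' ->
  derivable_pt_lim (fun s => det3 (a s) (b s) (c s)) t
    (det3 a' (b t) (c t) + det3 (a t) b' (c t) + det3 (a t) (b t) c').
Proof.
  intros [a1 [a2 a3]] [b1 [b2 b3]] [c1 [c2 c3]]. unfold det3.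
  eapply dpl_val; [|repeat first [ apply (derivable_pt_lim_minus (fun s => _) (fun s => _))
    | apply (derivable_pt_lim_plus (fun s => _) (fun s => _))
    | apply (derivable_pt_lim_mult (fun s => _) (fun s => _)) | eassumption ]].
  cbv beta; ring.
Qed.

Lemma curve_field U g t L : C1field_ok U -> curve_deriv g t L ->
  curve_deriv (fun s => vf U (g s)) t (jac U (g t) L).
Proof. intros [[H1 _] [[H2 _] [H3 _]]] HL. repeat split; [apply H1|apply H2|apply H3]; auto. Qed.

Lemma circle_deriv th : curve_deriv (fun s => (cos s, 0, sin s)) th (frame1 (cos th, 0, sin th)).
Proof.
  repeat split.
  - apply (dpl_ext cos); [reflexivity|apply derivable_pt_lim_cos].
  - apply (dpl_ext (fct_cte 0)); [reflexivity|apply derivable_pt_lim_const].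
  - apply (dpl_ext sin); [reflexivity|apply derivable_pt_lim_sin].
Qed.

Lemma detUV_deriv_along_D U V th0 l : C1field_ok U -> C1field_ok V ->
  derivable_pt_lim (fun th => detUV (vf U) (vf V) (cos th, 0, sin th)) th0 l ->
  let p := (cos th0, 0, sin th0) in
  l = det3 (frame1 p) (vf U p) (vf V p) + det3 p (jac U p (frame1 p)) (vf V p)
      + det3 p (vf U p) (jac V p (frame1 p)).
Proof.
  intros GU GV Hl p.
  pose proof (curve_det3 _ _ _ _ _ _ th0 (circle_deriv th0)
    (curve_field U _ th0 _ GU (circle_deriv th0)) (curve_field V _ th0 _ GV (circle_deriv th0))) as Hd.
  eapply uniqueness_limite; [exact Hl|exact Hd].
Qed.

Lemma blended_zero_on_D U V p s : C1field_ok U -> C1field_ok V -> D_sing_elementary (vf U) (vf V) ->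
  inD p -> 0 < s < 1 -> vadd (vscale (1 - s) (vf V p)) (vscale s (vf U p)) = v0 ->
  cy (vf U p) <> 0 /\ det3 p (jac_blend U V s p (frame1 p)) (vf U p) <> 0.
Proof.
  intros GU GV HD Hp Hs Hz. set (la := s / (1 - s)).
  assert (Hla : 0 < la) by (apply Rdiv_lt_0_compat; lra).
  assert (HV : vf V p = vscale (- la) (vf U p)).
  { apply R3_eq; unfold la, vscale, cx, cy, cz; simpl; apply (Rmult_eq_reg_l (1 - s)); try lra;
      [pose proof (f_equal cx Hz) as E|pose proof (f_equal cy Hz) as E|pose proof (f_equal cz Hz) as E];
      unfold vadd, vscale, v0, cx, cy, cz in E; simpl in E; field_simplify; lra. }
  destruct (antiparallel_on_D _ _ p la HD Hp Hla HV) as [Huy [_ [_ [_ [th0 [l [Hpth [Hl Hl0]]]]]]]].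
  split; [auto|].
  pose proof (detUV_deriv_along_D U V th0 l GU GV Hl) as El. cbv zeta in El. rewrite <- Hpth in El.
  assert (Hdet : det3 p (jac_blend U V s p (frame1 p)) (vf U p) = - (1 - s) * l).
  { rewrite El, HV. unfold jac_blend. rewrite det3_comb_l, !det3_scale_r, det3_diag,
      (det3_swap p (vf U p) (jac V p (frame1 p))).
    unfold la; field; lra. }
  rewrite Hdet. intro H0. apply Hl0. apply (Rmult_eq_reg_l (- (1 - s))); lra.
Qed.

Definition increasing (sg : nat -> nat) : Prop := forall n, (sg n < sg (S n))%nat.

Lemma increasing_ge sg : increasing sg -> forall n, (n <= sg n)%nat.
Proof. intros H n; induction n; [lia|]. specialize (H n); lia. Qed.

Lemma increasing_mono sg : increasing sg -> forall n m, (n <= m)%nat -> (sg n <= sg m)%nat.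
Proof. intros H n m Hnm; induction Hnm; [lia|]. specialize (H m); lia. Qed.

Lemma increasing_comp s1 s2 : increasing s1 -> increasing s2 -> increasing (fun n => s1 (s2 n)).
Proof.
  intros H1 H2 n. pose proof (increasing_mono s1 H1 (S (s2 n)) (s2 (S n)) (H2 n)).
  specialize (H1 (s2 n)). lia.
Qed.

Lemma cv_subseq u l sg : increasing sg -> Un_cv u l -> Un_cv (fun n => u (sg n)) l.
Proof.
  intros Hs Hu e He. destruct (Hu e He) as [N HN]. exists N. intros n Hn. apply HN.
  pose proof (increasing_ge sg Hs n); lia.
Qed.

Lemma inv_small e : 0 < e -> exists N, forall n, (N <= n)%nat -> / (INR n + 1) < e.
Proof.
  intros He. destruct (archimed_cor1 e He) as [N [HN1 HN2]]. exists N. intros n Hn.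
  apply le_INR in Hn. assert (0 < INR N) by (apply lt_0_INR; auto).
  eapply Rle_lt_trans; [|exact HN1]. apply Rinv_le_contravar; lra.
Qed.

Lemma cv_inv_INR : Un_cv (fun n => / (INR n + 1)) 0.
Proof.
  intros e He. destruct (inv_small e He) as [N HN]. exists N. intros n Hn. unfold Rdist.
  rewrite Rminus_0_r, Rabs_right; [auto|]. left; apply Rinv_0_lt_compat; pose proof (pos_INR n); lra.
Qed.

(* [subseq_from ch] picks indices [ch N k >= N] with increasing precision [k]. *)
Fixpoint subseq_from (ch : nat -> nat -> nat) (n : nat) : nat :=
  match n with O => ch O O | S m => ch (S (subseq_from ch m)) (S m) end.

Lemma extract_cv (u : nat -> R) a b : (forall n, a <= u n <= b) ->
  exists sg l, increasing sg /\ Un_cv (fun n => u (sg n)) l /\ a <= l <= b.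
Proof.
  intros Hu. destruct (Bolzano_Weierstrass u _ (compact_P3 a b) Hu) as [l Hl].
  assert (Hch : forall N k, exists p, (N <= p)%nat /\ Rabs (u p - l) < / (INR k + 1)).
  { intros N k. assert (Hp : 0 < / (INR k + 1)) by (apply Rinv_0_lt_compat; pose proof (pos_INR k); lra).
    apply (Hl (fun y => Rabs (y - l) < / (INR k + 1))). exists (mkposreal _ Hp).
    unfold included, disc; simpl; auto. }
  destruct (choice (fun Nk p => (fst Nk <= p)%nat /\ Rabs (u p - l) < / (INR (snd Nk) + 1)))
    as [ch0 Hc0]; [intros [N k]; apply Hch|].
  set (ch := fun N k => ch0 (N, k)).
  assert (Hc : forall N k, (N <= ch N k)%nat /\ Rabs (u (ch N k) - l) < / (INR k + 1))
    by (intros N k; apply (Hc0 (N, k))).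
  assert (Hcl : forall n, Rabs (u (subseq_from ch n) - l) < / (INR n + 1)) by (intros [|n]; simpl; apply Hc).
  assert (Hcv : Un_cv (fun n => u (subseq_from ch n)) l).
  { intros e He. destruct (inv_small e He) as [N HN]. exists N. intros n Hn. unfold Rdist.
    eapply Rlt_trans; [apply Hcl|apply HN; auto]. }
  exists (subseq_from ch), l. split; [intros n; simpl; apply Hc|]. split; [exact Hcv|].
  split; [apply (@Rle_cv_lim (fun _ => a) (fun n => u (subseq_from ch n)))
         |apply (@Rle_cv_lim (fun n => u (subseq_from ch n)) (fun _ => b))];
    auto using cv_const; intros; apply Hu.
Qed.

Lemma extract_sphere_interval (qn : nat -> R3) (tn : nat -> R) :
  (forall n, sphere (qn n)) -> (forall n, -1 <= tn n <= 1) ->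
  exists sg p t0, increasing sg /\ cv3 (fun n => qn (sg n)) p /\
    Un_cv (fun n => tn (sg n)) t0 /\ -1 <= t0 <= 1.
Proof.
  intros Hq Ht.
  destruct (extract_cv (fun n => cx (qn n)) (-1) 1 ltac:(intro; apply sphere_bound; auto))
    as [s1 [x0 [I1 [C1 _]]]].
  destruct (extract_cv (fun n => cy (qn (s1 n))) (-1) 1 ltac:(intro; apply sphere_bound; auto))
    as [s2 [y0 [I2 [C2 _]]]].
  destruct (extract_cv (fun n => cz (qn (s1 (s2 n)))) (-1) 1 ltac:(intro; apply sphere_bound; auto))
    as [s3 [z0 [I3 [C3 _]]]].
  destruct (extract_cv (fun n => tn (s1 (s2 (s3 n)))) (-1) 1 ltac:(intro; apply Ht))
    as [s4 [t0 [I4 [C4 B4]]]].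
  assert (I34 := increasing_comp s3 s4 I3 I4).
  assert (I234 := increasing_comp s2 _ I2 I34).
  exists (fun n => s1 (s2 (s3 (s4 n)))), (x0, y0, z0), t0.
  split; [apply (increasing_comp s1 _ I1 I234)|]. split; [|auto].
  split; [|split].
  - exact (cv_subseq _ _ _ I234 C1).
  - exact (cv_subseq _ _ _ I34 C2).
  - exact (cv_subseq _ _ _ I4 C3).
Qed.

Lemma cv_squeeze0 u v : (forall n, Rabs (u n) <= v n) -> Un_cv v 0 -> Un_cv u 0.
Proof.
  intros H Hv e He. destruct (Hv e He) as [N HN]. exists N. intros n Hn. specialize (HN n Hn).
  unfold Rdist in *. rewrite Rminus_0_r in *. specialize (H n). pose proof (Rabs_pos (u n)).
  rewrite Rabs_right in HN by lra. lra.
Qed.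

Lemma cv_nonzero_eventually u l : Un_cv u l -> l <> 0 -> exists N, forall n, (N <= n)%nat -> u n <> 0.
Proof.
  intros Hu Hl. destruct (Hu (Rabs l) (Rabs_pos_lt _ Hl)) as [N HN]. exists N. intros n Hn Hz.
  specialize (HN n Hn). unfold Rdist in HN. rewrite Hz, Rminus_0_l, Rabs_Ropp in HN. lra.
Qed.

Lemma cv_det3 an a bn b cn c : cv3 an a -> cv3 bn b -> cv3 cn c ->
  Un_cv (fun n => det3 (an n) (bn n) (cn n)) (det3 a b c).
Proof. intros [A1 [A2 A3]] [B1 [B2 B3]] [C1 [C2 C3]]. unfold det3. cv_arith. Qed.

Lemma cv3_vadd an a bn b : cv3 an a -> cv3 bn b -> cv3 (fun n => vadd (an n) (bn n)) (vadd a b).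
Proof. intros [A1 [A2 A3]] [B1 [B2 B3]]. repeat split; unfold vadd, cx, cy, cz; simpl; cv_arith. Qed.

Lemma cv3_vscale sn s an a : Un_cv sn s -> cv3 an a -> cv3 (fun n => vscale (sn n) (an n)) (vscale s a).
Proof. intros S [A1 [A2 A3]]. repeat split; unfold vscale, cx, cy, cz; simpl; cv_arith. Qed.

Lemma cv3_frame1 qn p : cv3 qn p -> cv3 (fun n => frame1 (qn n)) (frame1 p).
Proof. intros [A1 [A2 A3]]. repeat split; unfold frame1, cx, cy, cz in *; simpl; cv_arith. Qed.

Lemma cv3_frame2 qn p : cv3 qn p -> cv3 (fun n => frame2 (qn n)) (frame2 p).
Proof. intros [A1 [A2 A3]]. repeat split; unfold frame2, cx, cy, cz in *; simpl; cv_arith. Qed.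

Lemma cv3_unique qn p p' : cv3 qn p -> cv3 qn p' -> p = p'.
Proof.
  intros [A1 [A2 A3]] [B1 [B2 B3]].
  apply R3_eq; eapply UL_sequence; eauto.
Qed.

Lemma cv3_const a : cv3 (fun _ => a) a.
Proof. repeat split; apply cv_const. Qed.

Lemma cv3_ext qn rn p : (forall n, qn n = rn n) -> cv3 qn p -> cv3 rn p.
Proof. intros E [A1 [A2 A3]]. repeat split; eapply cv_ext; eauto; intro n; simpl; rewrite E; auto. Qed.

Lemma cv3_field U qn p : C1field_ok U -> cv3 qn p -> cv3 (fun n => vf U (qn n)) (vf U p).
Proof. intros [[_ [H1 _]] [[_ [H2 _]] [_ [H3 _]]]] Hc. repeat split; [apply H1|apply H2|apply H3]; auto. Qed.

Lemma cv_dot an a bn b : cv3 an a -> cv3 bn b -> Un_cv (fun n => dot (an n) (bn n)) (dot a b).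
Proof. intros [A1 [A2 A3]] [B1 [B2 B3]]. unfold dot. cv_arith. Qed.

Lemma cv3_jac U qn p wn w : C1field_ok U -> cv3 qn p -> cv3 wn w ->
  cv3 (fun n => jac U (qn n) (wn n)) (jac U p w).
Proof.
  intros [[_ [_ [a1 [a2 a3]]]] [[_ [_ [b1 [b2 b3]]]] [_ [_ [c1 [c2 c3]]]]]] Hq Hw.
  repeat split; apply cv_dot; auto; repeat split; auto.
Qed.

Lemma cv3_jac_blend U V sn s qn p wn w : C1field_ok U -> C1field_ok V ->
  Un_cv sn s -> cv3 qn p -> cv3 wn w ->
  cv3 (fun n => jac_blend U V (sn n) (qn n) (wn n)) (jac_blend U V s p w).
Proof.
  intros GU GV Hs Hq Hw. unfold jac_blend.
  apply cv3_vadd; apply cv3_vscale; try apply cv3_jac; auto. cv_arith.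
Qed.

Lemma cv3_jump U V qn p : C1field_ok U -> C1field_ok V -> cv3 qn p ->
  cv3 (fun n => jump U V (qn n)) (jump U V p).
Proof. intros GU GV Hq. apply cv3_vadd; [|apply cv3_vscale; [apply cv_const|]]; apply cv3_field; auto. Qed.

(* Multiplying the trace and
   determinant of the linearization [Dreg] by eps isolates the rank-one term dphi/eps, which dominates as eps -> 0.  Along
   any sequence of zeros of the regularized fields with eps_n -> 0, a
   subsequence converges to a point of D where a convex combination of U and
   V vanishes; there the limits of the rescaled trace and determinant are
   nonzero by [blended_zero_on_D]. *)

Lemma Dreg_trace U V phi dphi eps q : eps <> 0 ->
  eps * mat_tr (Dreg U V phi dphi eps q) q =
  eps * mat_tr (jac_blend U V (phi (cy q / eps)) q) q
  + dphi (cy q / eps) * cy (frame2 q) * det3 q (frame1 q) (jump U V q).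
Proof.
  intros He. unfold mat_tr, mat11, mat22, Dreg.
  rewrite det3_add_scale_l, det3_add_scale_r. replace (cy (frame1 q)) with 0 by reflexivity.
  field; auto.
Qed.

Lemma Dreg_det U V phi dphi eps q : eps <> 0 ->
  eps * mat_det (Dreg U V phi dphi eps q) q =
  eps * mat_det (jac_blend U V (phi (cy q / eps)) q) q
  + dphi (cy q / eps) * cy (frame2 q) * (det3 q (frame1 q) (frame2 q)
    * det3 q (jac_blend U V (phi (cy q / eps)) q (frame1 q)) (jump U V q)).
Proof.
  intros He. unfold mat_det, mat11, mat12, mat21, mat22, Dreg.
  rewrite !det3_add_scale_l, !det3_add_scale_r. replace (cy (frame1 q)) with 0 by reflexivity.
  rewrite <- (det3_pluecker q (jac_blend U V (phi (cy q / eps)) q (frame1 q)) (frame2 q)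
    (frame1 q) (jump U V q)).
  field; auto.
Qed.

Lemma frame_on_D p : inD p ->
  cy (frame2 p) = -1 /\ det3 p (frame1 p) (frame2 p) = 1 /\
  forall w, det3 p (frame1 p) w = - cy w.
Proof.
  intros [Hs Hy]. unfold sphere in Hs. rewrite Hy in Hs.
  assert (Hx2 : cx p ^ 2 + cz p ^ 2 = 1) by lra.
  split; [|split].
  - change (cy (frame2 p)) with (- (cx p ^ 2 + cz p ^ 2)). rewrite Hx2; ring.
  - rewrite frame_det, Hx2, Hy, Hs; ring.
  - intros w. transitivity (- (cx p ^ 2 + cz p ^ 2) * cy w); [|rewrite Hx2; ring].
    unfold det3, frame1; unfold cx, cy, cz in *; simpl in *; rewrite Hy; ring.
Qed.

Lemma jump_at_blended_zero U V q s : s <> 1 ->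
  vadd (vscale (1 - s) (vf V q)) (vscale s (vf U q)) = v0 -> jump U V q = vscale (/ (1 - s)) (vf U q).
Proof.
  intros Hs Hz.
  assert (Hc : forall k : R3 -> R, k = cx \/ k = cy \/ k = cz -> (1 - s) * k (vf V q) + s * k (vf U q) = 0).
  { intros k Hk. pose proof (f_equal k Hz) as E.
    destruct Hk as [ -> | [ -> | -> ] ]; unfold vadd, vscale, v0, cx, cy, cz in *; simpl in *; lra. }
  assert (Hk : forall k : R3 -> R, k = cx \/ k = cy \/ k = cz ->
    k (vf U q) - k (vf V q) = / (1 - s) * k (vf U q)).
  { intros k Hk'. apply (Rmult_eq_reg_l (1 - s)); [|lra].
    pose proof (Hc k Hk'). field_simplify; [lra|lra]. }
  unfold jump; apply R3_eq; unfold vadd, vscale; simpl;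
    [rewrite <- (Hk cx)|rewrite <- (Hk cy)|rewrite <- (Hk cz)]; auto; unfold cx, cy, cz; simpl; ring.
Qed.

Lemma limit_on_D (E : nat -> R) Q p : Un_cv E 0 -> (forall n, sphere (Q n)) ->
  (forall n, Rabs (cy (Q n)) < E n) -> cv3 Q p -> inD p.
Proof.
  intros HE HQs HQy [HQx [HQy' HQz]].
  assert (Hy0 : cy p = 0).
  { apply (UL_sequence (fun n => cy (Q n))); [exact HQy'|].
    apply (cv_squeeze0 _ E); auto. intro n; left; apply HQy. }
  split; [|auto].
  assert (L1 : Un_cv (fun n => cx (Q n) * cx (Q n) + cy (Q n) * cy (Q n) + cz (Q n) * cz (Q n))
                     (cx p * cx p + cy p * cy p + cz p * cz p)) by cv_arith.
  assert (L2 : Un_cv (fun n => cx (Q n) * cx (Q n) + cy (Q n) * cy (Q n) + cz (Q n) * cz (Q n)) 1).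
  { apply (cv_ext (fun _ => 1)); [|apply cv_const].
    intro n; specialize (HQs n); unfold sphere in HQs; simpl in HQs; lra. }
  pose proof (UL_sequence _ _ _ L1 L2) as E1. unfold sphere; nra.
Qed.

Section NearD.

Variables (U V : C1field) (phi dphi : R -> R).
Hypotheses (GU : C1field_ok U) (GV : C1field_ok V) (HD : D_sing_elementary (vf U) (vf V))
  (Hphi : transition_data phi dphi).

Definition reg_zero (eps : R) (q : R3) : Prop :=
  blend (vf U) (vf V) (fun q => phi (cy q / eps)) q = v0.

Lemma blowup_limit_point (E : nat -> R) (Q : nat -> R3) p t0 :
  Un_cv E 0 -> (forall n, sphere (Q n)) -> (forall n, Rabs (cy (Q n)) < E n) ->
  (forall n, reg_zero (E n) (Q n)) ->
  cv3 Q p -> Un_cv (fun n => cy (Q n) / E n) t0 -> -1 <= t0 <= 1 ->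
  inD p /\ -1 < t0 < 1 /\ 0 < phi t0 < 1 /\
  vadd (vscale (1 - phi t0) (vf V p)) (vscale (phi t0) (vf U p)) = v0.
Proof.
  intros HE HQs HQy HQz HQ Ht Ht0.
  destruct Hphi as [_ [Hpc [_ [_ [_ [_ [Hp1 [Hpm1 Hrange]]]]]]]].
  assert (Hp : inD p) by exact (limit_on_D E Q p HE HQs HQy HQ).
  assert (Hz : vadd (vscale (1 - phi t0) (vf V p)) (vscale (phi t0) (vf U p)) = v0).
  { apply (cv3_unique (fun n => blend (vf U) (vf V) (fun q => phi (cy q / E n)) (Q n))).
    - assert (Hs : Un_cv (fun n => phi (cy (Q n) / E n)) (phi t0)) by (apply continuity_seq; auto).
      apply cv3_vadd; apply cv3_vscale; try apply cv3_field; auto. cv_arith.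
    - apply (cv3_ext (fun _ => v0)); [intro n; symmetry; apply HQz|apply cv3_const]. }
  (* U and V do not vanish on D, so phi t0 is neither 0 nor 1 *)
  destruct (fields_nonvanishing_on_D _ _ _ HD Hp) as [HUn HVn].
  assert (Hs0 : phi t0 <> 0 /\ phi t0 <> 1).
  { split; intro H0; rewrite H0 in Hz; [apply HVn|apply HUn]; rewrite <- Hz; r3_ring. }
  assert (Ht0' : -1 < t0 < 1).
  { destruct Hs0 as [Hs0 Hs1]. split; apply Rnot_le_lt; intro Hle;
      [apply Hs0, Hpm1|apply Hs1, Hp1]; lra. }
  pose proof (Hrange t0 Ht0). destruct Hs0.
  split; [exact Hp|]. split; [exact Ht0'|]. split; [lra|exact Hz].
Qed.

Lemma blowup_limit (E : nat -> R) (Q : nat -> R3) p t0 :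
  (forall n, 0 < E n) -> Un_cv E 0 ->
  (forall n, sphere (Q n)) -> (forall n, Rabs (cy (Q n)) < E n) -> (forall n, reg_zero (E n) (Q n)) ->
  cv3 Q p -> Un_cv (fun n => cy (Q n) / E n) t0 -> -1 <= t0 <= 1 ->
  exists N, forall n, (N <= n)%nat ->
    mat_det (Dreg U V phi dphi (E n) (Q n)) (Q n) <> 0 /\
    mat_tr (Dreg U V phi dphi (E n) (Q n)) (Q n) <> 0.
Proof.
  intros HEp HE HQs HQy HQz HQ Ht Ht0.
  destruct (blowup_limit_point E Q p t0 HE HQs HQy HQz HQ Ht Ht0) as [Hp [Ht0' [Hs01 Hz]]].
  destruct Hphi as [_ [Hpc [Hdc [Hdp _]]]].
  set (s0 := phi t0) in *. set (ds := dphi t0).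
  set (sn := fun n => phi (cy (Q n) / E n)).
  assert (Hs : Un_cv sn s0) by (apply continuity_seq; auto).
  assert (Hds : Un_cv (fun n => dphi (cy (Q n) / E n)) ds) by (apply continuity_seq; auto).
  assert (Hds0 : 0 < ds) by (apply Hdp; auto).
  destruct (blended_zero_on_D U V p s0 GU GV HD Hp Hs01 Hz) as [Huy Hdet].
  destruct (frame_on_D p Hp) as [Hf2 [Hdelta Hf1]].
  pose proof (cv3_frame1 _ _ HQ) as C1. pose proof (cv3_frame2 _ _ HQ) as C2.
  assert (CA : forall wn w, cv3 wn w -> cv3 (fun n => jac_blend U V (sn n) (Q n) (wn n)) (jac_blend U V s0 p w))
    by (intros; apply cv3_jac_blend; auto).
  pose proof (cv3_jump U V Q p GU GV HQ) as CW.
  rewrite (jump_at_blended_zero U V p s0) in CW by (auto; lra).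
  assert (HEn : forall n, E n <> 0) by (intro n; specialize (HEp n); lra).
  assert (Ctr : Un_cv (fun n => E n * mat_tr (Dreg U V phi dphi (E n) (Q n)) (Q n))
                      (ds * cy (vf U p) / (1 - s0))).
  { eapply cv_ext; [intro n; symmetry; apply Dreg_trace; auto|].
    eapply cv_eq; [apply CV_plus; [apply CV_mult; [exact HE|]|apply CV_mult; [apply CV_mult; [exact Hds|apply C2]|]]|].
    - unfold mat_tr, mat11, mat22. apply CV_plus; apply cv_det3; eauto.
    - apply cv_det3; eauto.
    - rewrite Hf2, (Hf1 (vscale _ _)). unfold vscale, cy; simpl. field; lra. }
  assert (Cdet : Un_cv (fun n => E n * mat_det (Dreg U V phi dphi (E n) (Q n)) (Q n))
                       (- ds / (1 - s0) * det3 p (jac_blend U V s0 p (frame1 p)) (vf U p))).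
  { eapply cv_ext; [intro n; symmetry; apply Dreg_det; auto|].
    eapply cv_eq; [apply CV_plus; [apply CV_mult; [exact HE|]|apply CV_mult; [apply CV_mult; [exact Hds|apply C2]|]]|].
    - unfold mat_det, mat11, mat12, mat21, mat22. apply CV_minus; apply CV_mult; apply cv_det3; eauto.
    - apply CV_mult; apply cv_det3; eauto.
    - rewrite Hf2, Hdelta, det3_scale_r. field; lra. }
  destruct (cv_nonzero_eventually _ _ Ctr) as [N1 HN1].
  { unfold Rdiv; repeat apply Rmult_integral_contrapositive_currified; try apply Rinv_neq_0_compat; lra. }
  destruct (cv_nonzero_eventually _ _ Cdet) as [N2 HN2].
  { unfold Rdiv; repeat apply Rmult_integral_contrapositive_currified; auto;
      try apply Rinv_neq_0_compat; lra. }
  exists (max N1 N2). intros n Hn. split; intro H0.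
  - apply (HN2 n ltac:(lia)). rewrite H0; ring.
  - apply (HN1 n ltac:(lia)). rewrite H0; ring.
Qed.

Lemma nondegenerate_zeros_near_D :
  exists eps0, 0 < eps0 <= 1 /\ forall eps q, 0 < eps <= eps0 -> sphere q -> Rabs (cy q) < eps ->
    reg_zero eps q ->
    mat_det (Dreg U V phi dphi eps q) q <> 0 /\ mat_tr (Dreg U V phi dphi eps q) q <> 0.
Proof.
  apply NNPP; intro Hno.
  assert (Hseq : forall n : nat, exists x : R * R3,
    (0 < fst x <= / (INR n + 1)) /\ sphere (snd x) /\ Rabs (cy (snd x)) < fst x /\
    reg_zero (fst x) (snd x) /\
    ~ (mat_det (Dreg U V phi dphi (fst x) (snd x)) (snd x) <> 0 /\
       mat_tr (Dreg U V phi dphi (fst x) (snd x)) (snd x) <> 0)).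
  { intro n. apply NNPP; intro Hn. apply Hno. exists (/ (INR n + 1)).
    pose proof (pos_INR n). split.
    { split; [apply Rinv_0_lt_compat; lra|rewrite <- Rinv_1; apply Rinv_le_contravar; lra]. }
    intros eps q Heps Hs Hy Hz. apply NNPP; intro Hbad. apply Hn. exists (eps, q). simpl. tauto. }
  destruct (choice _ Hseq) as [f Hf].
  set (en := fun n => fst (f n)). set (qn := fun n => snd (f n)).
  assert (Hen : forall n, 0 < en n <= / (INR n + 1)) by (intro n; apply (Hf n)).
  assert (Hqs : forall n, sphere (qn n)) by (intro n; apply (Hf n)).
  assert (Hqy : forall n, Rabs (cy (qn n)) < en n) by (intro n; apply (Hf n)).
  assert (Hqz : forall n, reg_zero (en n) (qn n)) by (intro n; apply (Hf n)).
  assert (Hqbad : forall n, ~ (mat_det (Dreg U V phi dphi (en n) (qn n)) (qn n) <> 0 /\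
                               mat_tr (Dreg U V phi dphi (en n) (qn n)) (qn n) <> 0))
    by (intro n; apply (Hf n)).
  clearbody en qn. clear Hf Hseq.
  assert (Hen0 : Un_cv en 0).
  { apply (cv_squeeze0 _ (fun n => / (INR n + 1))); [|exact cv_inv_INR].
    intro n. specialize (Hen n). rewrite Rabs_right; lra. }
  assert (Htn : forall n, -1 <= cy (qn n) / en n <= 1).
  { intro n. specialize (Hen n). specialize (Hqy n). apply Rabs_def2 in Hqy.
    split; [apply div_lower|apply div_upper]; lra. }
  destruct (extract_sphere_interval qn (fun n => cy (qn n) / en n) Hqs Htn)
    as [sg [p [t0 [Isg [HQ [Ht Ht0]]]]]].
  destruct (blowup_limit (fun n => en (sg n)) (fun n => qn (sg n)) p t0
    (fun n => proj1 (Hen (sg n))) (cv_subseq _ _ _ Isg Hen0) (fun n => Hqs (sg n))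
    (fun n => Hqy (sg n)) (fun n => Hqz (sg n)) HQ Ht Ht0) as [N HN].
  exact (Hqbad (sg N) (HN N (Nat.le_refl N))).
Qed.

Lemma hyperbolic_in_band eps q : 0 < eps <= 1 -> sphere q -> Rabs (cy q) < eps -> reg_zero eps q ->
  mat_det (Dreg U V phi dphi eps q) q <> 0 -> mat_tr (Dreg U V phi dphi eps q) q <> 0 ->
  hyperbolic_sing (blend (vf U) (vf V) (fun q => phi (cy q / eps))) q.
Proof.
  intros Heps Hs Hb Hz Hdet Htr. split; [auto|split; [exact Hz|]].
  intros b u v Lu Lv Htu Htv Du Dv Eu Ev.
  destruct Hphi as [Hder _].
  rewrite (dderiv_blend U V phi dphi eps q u Lu GU GV ltac:(lra) Hder Du) in Eu.
  rewrite (dderiv_blend U V phi dphi eps q v Lv GU GV ltac:(lra) Hder Dv) in Ev.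
  apply NNPP; intro Hn.
  assert (Hy2 : cy q ^ 2 < 1) by (apply Rabs_def2 in Hb; nra).
  destruct (tangent_imaginary_eigenvalue _ q b u v (Dreg_linear U V phi dphi eps q) Hs Hy2 Htu Htv Eu Ev Hn);
    contradiction.
Qed.

Lemma regularization_above eps q : 0 < eps -> eps <= cy q ->
  blend (vf U) (vf V) (fun q => phi (cy q / eps)) q = vf U q /\
  forall u L, dderiv (blend (vf U) (vf V) (fun q => phi (cy q / eps))) q u L -> dderiv (vf U) q u L.
Proof.
  intros Heps Hy. destruct Hphi as [Hder [_ [_ [_ [Hd1 [_ [Hp1 _]]]]]]].
  assert (Ht : 1 <= cy q / eps) by (apply div_lower; lra).
  split; [unfold blend; rewrite (Hp1 _ Ht); r3_ring|].
  intros u L Du. rewrite (dderiv_blend U V phi dphi eps q u L GU GV ltac:(lra) Hder Du).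
  replace (Dreg U V phi dphi eps q u) with (jac U q u); [apply jac_dderiv; auto|].
  unfold Dreg, jac_blend. rewrite (Hp1 _ Ht), (Hd1 _ Ht). unfold Rdiv; rewrite !Rmult_0_l. r3_ring.
Qed.

Lemma regularization_below eps q : 0 < eps -> cy q <= - eps ->
  blend (vf U) (vf V) (fun q => phi (cy q / eps)) q = vf V q /\
  forall u L, dderiv (blend (vf U) (vf V) (fun q => phi (cy q / eps))) q u L -> dderiv (vf V) q u L.
Proof.
  intros Heps Hy. destruct Hphi as [Hder [_ [_ [_ [_ [Hd1 [_ [Hp1 _]]]]]]]].
  assert (Ht : cy q / eps <= -1) by (apply div_upper; lra).
  split; [unfold blend; rewrite (Hp1 _ Ht); r3_ring|].
  intros u L Du. rewrite (dderiv_blend U V phi dphi eps q u L GU GV ltac:(lra) Hder Du).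
  replace (Dreg U V phi dphi eps q u) with (jac V q u); [apply jac_dderiv; auto|].
  unfold Dreg, jac_blend. rewrite (Hp1 _ Ht), (Hd1 _ Ht). unfold Rdiv; rewrite !Rmult_0_l. r3_ring.
Qed.

End NearD.

Lemma hyperbolic_same_linearization (F G : VF3) q : F q = v0 ->
  (forall u L, dderiv F q u L -> dderiv G q u L) -> hyperbolic_sing G q -> hyperbolic_sing F q.
Proof.
  intros Hz HFG [Hs [_ Hh]]. split; [auto|split; [auto|]].
  intros b u v Lu Lv Htu Htv Du Dv. apply Hh; auto.
Qed.

Theorem mainTheorem7 (m : nat) (X Y : PVF) :
  (1 <= m)%nat ->
  G_m1 m X Y ->
  forall phi : R -> R, transition_fun phi ->
  exists eps0 : R, 0 < eps0 /\
    forall eps : R, 0 < eps <= eps0 ->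
    forall q : R3, sphere q -> regularization m X Y phi eps q = v0 ->
      hyperbolic_sing (regularization m X Y phi eps) q.
Proof.
  intros _ [_ [_ [[HsingX _] [[HsingY _] HD]]]] phi Htr.
  destruct (poinc_C1field m X) as [U [HU GU]], (poinc_C1field m Y) as [V [HV GV]].
  destruct (transition_fun_data phi Htr) as [dphi Hphi].
  rewrite <- HU, <- HV in HD. rewrite <- HU in HsingX. rewrite <- HV in HsingY.
  destruct (nondegenerate_zeros_near_D U V phi dphi GU GV HD Hphi) as [eps0 [He0 Hnear]].
  exists eps0. split; [lra|]. intros eps Heps q Hs Hz.
  rewrite regularization_blend, <- HU, <- HV in *.
  destruct (Rlt_le_dec (Rabs (cy q)) eps) as [Hb|Hb]; [|destruct (Rle_lt_dec 0 (cy q)) as [Hy|Hy]].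
  -
    destruct (Hnear eps q Heps Hs Hb Hz). apply (hyperbolic_in_band U V phi dphi); auto; lra.
  -
    rewrite Rabs_right in Hb by lra.
    destruct (regularization_above U V phi dphi GU GV Hphi eps q ltac:(lra) Hb) as [E Hlin].
    apply (hyperbolic_same_linearization _ (vf U)); auto.
    apply HsingX; [auto|unfold Nreg; lra|rewrite <- E; auto].
  -
    rewrite Rabs_left in Hb by lra.
    destruct (regularization_below U V phi dphi GU GV Hphi eps q ltac:(lra) ltac:(lra)) as [E Hlin].
    apply (hyperbolic_same_linearization _ (vf V)); auto.
    apply HsingY; [auto|unfold Sreg; lra|rewrite <- E; auto].
Qed.
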